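(* Fix an increasing sequence of positive integers $(q_\ell)_{\ell\in\mathcal L}$, $\mathcal L$ a (finite or infinite) set of consecutive integers starting at $0$, and for $d\in(\frac12(1-1/q_0),\frac12)$ let $\nu_c(d)$ be the critical exponent defined below. Then: (i) if $q_0=1$, $\nu_c(d)$ is non-increasing in $d$; (ii) if $q_0\ge2$, $\nu_c(d)$ is non-decreasing in $d$.
   Context: For $q\ge1$, $\delta(q)=qd-(q-1)/2$ and $\delta_+(q)=\max(\delta(q),0)$. For $r\ge0$ let $I_r=\{\ell\in\mathcal L:\ell+1\in\mathcal L,\ q_{\ell+1}=q_\ell+r+1\}$ and $\ell_r=\min I_r$ when $I_r\ne\emptyset$; $\mathcal R_d=\{r\ge0:I_r\ne\emptyset,\ \delta(r+1)>0\}$; $J_d=\{\ell\in\mathcal L:\ell+1\in\mathcal L,\ \delta(q_{\ell+1}-q_\ell)>0\}$. Critical exponent: $\nu_c=\infty$ if $\mathcal L=\{0\}$; $\infty$ if $q_0=1,d\le1/4,I_0=\emptyset$; $\frac{d+1/2-2\delta_+(q_{\ell_0})}{d}$ if $q_0=1,d\le1/4,I_0\ne\emptyset$; $\frac{1-2\delta_+(q_1-1)}{2d-1/2}$ if $q_0=1,d>1/4,1\in\mathcal L,J_d=\emptyset$; $\min\big(\frac{1-2\delta_+(q_1-1)}{2d-1/2},\frac{2d+1/2-2\delta_+(q_{\ell_r})-\delta(r+1)}{\delta(r+1)}:r\in\mathcal R_d\big)$ if $q_0=1,d>1/4,J_d\ne\emptyset$; $\infty$ if $q_0\ge2,I_0=\emptyset$;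 $1+\frac{4(\delta(q_0)-\delta_+(q_{\ell_0}))}{1-2d}$ if $q_0\ge2,I_0\ne\emptyset$. Monotonicity is in the extended reals $(0,\infty]$. *)

From Stdlib Require Import Reals Lra Classical ClassicalEpsilon ClassicalDescription.
Open Scope R_scope.

(* Extended reals (0,oo]: [Some x] is the real x, [None] is +oo. *)
Definition ext_le (x y : option R) : Prop :=
  match y with
  | None => True
  | Some b => match x with None => False | Some a => a <= b end
  end.

Definition delta (d x : R) : R := x * d - (x - 1) / 2.
Definition deltap (d x : R) : R := Rmax (delta d x) 0.

Section NuC.
Variables (L : nat -> Prop) (q : nat -> nat).

Definition Iset (r l : nat) : Prop :=
  L l /\ L (S l) /\ q (S l) = (q l + r + 1)%nat.

(* l_r = min I_r (meaningful when I_r is nonempty). *)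
Definition ell (r : nat) : nat :=
  epsilon (inhabits 0%nat) (fun l => Iset r l /\ forall m, Iset r m -> (l <= m)%nat).

Definition Rset (d : R) (r : nat) : Prop :=
  (exists l, Iset r l) /\ delta d (INR r + 1) > 0.

Definition Jne (d : R) : Prop :=
  exists l, L l /\ L (S l) /\ delta d (INR (q (S l)) - INR (q l)) > 0.

Definition term0 (d : R) : R :=
  (1 - 2 * deltap d (INR (q 1%nat) - 1)) / (2 * d - 1 / 2).

Definition termr (d : R) (r : nat) : R :=
  (2 * d + 1 / 2 - 2 * deltap d (INR (q (ell r))) - delta d (INR r + 1))
    / delta d (INR r + 1).

(* min( term0, termr r : r in R_d )  (the set R_d is finite for d < 1/2) *)
Definition min_terms (d : R) : R :=
  epsilon (inhabits 0)
    (fun v => (v = term0 d \/ exists r, Rset d r /\ v = termr d r)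
              /\ v <= term0 d /\ forall r, Rset d r -> v <= termr d r).

Definition decP (P : Prop) : bool :=
  if excluded_middle_informative P then true else false.

Definition nu_c (d : R) : option R :=
  if decP (~ L 1%nat) then None
  else if Nat.eqb (q 0%nat) 1 then
    if decP (d <= 1 / 4) then
      if decP (exists l, Iset 0 l) then
        Some ((d + 1 / 2 - 2 * deltap d (INR (q (ell 0)))) / d)
      else None
    else
      if decP (Jne d) then Some (min_terms d) else Some (term0 d)
  else
    if decP (exists l, Iset 0 l) then
      Some (1 + 4 * (delta d (INR (q 0%nat)) - deltap d (INR (q (ell 0)))) / (1 - 2 * d))
    else None.

End NuC.

From Stdlib Require Import Reals Lra Psatz Lia Wf_nat Classical ClassicalEpsilon ClassicalDescription.
Open Scope R_scope.

(* Since [delta_+ = max(delta, 0)], each closed-form branch of nu_c is, as a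
   function of [d], the minimum of two rational functions (one for each value of
   [delta_+]), each monotone in the claimed direction; after cross-multiplying
   this is a polynomial inequality.  The branch [q_0 = 1, d > 1/4] is a minimum
   over [R_d], which is finite ([delta (r+1) > 0] forces [r < 2d/(1-2d)]) and
   grows with [d]: the minimum at [d1] is attained at [term0] or at some
   [termr r] with [r] in [R_{d1}], a subset of [R_{d2}], so it bounds the
   minimum at [d2].  At [r = 0], [termr] is the formula of the branch
   [d <= 1/4], which glues the two regimes together. *)

Lemma decP_true (P : Prop) : P -> decP P = true.
Proof. now unfold decP; destruct (excluded_middle_informative P). Qed.

Lemma decP_false (P : Prop) : ~ P -> decP P = false.
Proof. now unfold decP; destruct (excluded_middle_informative P). Qed.

Lemma deltap_cases d x :
  (delta d x <= 0 /\ deltap d x = 0) \/ (0 <= delta d x /\ deltap d x = delta d x).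
Proof.
  unfold deltap, Rmax; destruct Rle_dec; [left | right]; split; lra.
Qed.

Lemma Rdiv_le_cross a b x y : 0 < x -> 0 < y -> a * y <= b * x -> a / x <= b / y.
Proof.
  intros Hx Hy Hab; apply Rmult_le_reg_r with (x * y); [nra|].
  replace (a / x * (x * y)) with (a * y) by (field; lra).
  replace (b / y * (x * y)) with (b * x) by (field; lra).
  exact Hab.
Qed.

Lemma delta_nondecreasing d1 d2 x : 0 <= x -> d1 <= d2 -> delta d1 x <= delta d2 x.
Proof. unfold delta; nra. Qed.

Lemma term0_antitone (q : nat -> nat) d1 d2 :
  2 <= INR (q 1%nat) -> 1 / 4 < d1 -> d1 <= d2 -> term0 q d2 <= term0 q d1.
Proof.
  unfold term0; intros Hq1 Hd1 H12; apply Rdiv_le_cross; [lra | lra |].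
  destruct (deltap_cases d1 (INR (q 1%nat) - 1)) as [[H1 ->] | [H1 ->]];
    destruct (deltap_cases d2 (INR (q 1%nat) - 1)) as [[H2 ->] | [H2 ->]];
    unfold delta in *; nra.
Qed.

Lemma termr_antitone L q r d1 d2 :
  1 <= INR (q (ell L q r)) -> d1 <= d2 -> 0 < delta d1 (INR r + 1) ->
  termr L q d2 r <= termr L q d1 r.
Proof.
  unfold termr; intros HQ H12 Hs1.
  pose proof (pos_INR r) as Hr.
  assert (Hs2 : 0 < delta d2 (INR r + 1)) by (pose proof (delta_nondecreasing d1 d2 (INR r + 1)); lra).
  apply Rdiv_le_cross; [exact Hs2 | exact Hs1 |].
  destruct (deltap_cases d1 (INR (q (ell L q r)))) as [[H1 ->] | [H1 ->]];
    destruct (deltap_cases d2 (INR (q (ell L q r)))) as [[H2 ->] | [H2 ->]];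
    unfold delta in *; nra.
Qed.

Lemma termr_0 L q d :
  termr L q d 0 = (d + 1 / 2 - 2 * deltap d (INR (q (ell L q 0)))) / d.
Proof.
  unfold termr; replace (delta d (INR 0 + 1)) with d by (unfold delta; simpl; lra).
  f_equal; lra.
Qed.

Lemma q0_branch_monotone Q0 Q d1 d2 : d1 <= d2 -> d2 < 1 / 2 ->
  1 + 4 * (delta d1 Q0 - deltap d1 Q) / (1 - 2 * d1) <=
  1 + 4 * (delta d2 Q0 - deltap d2 Q) / (1 - 2 * d2).
Proof.
  intros H12 Hd2; apply Rplus_le_compat_l, Rdiv_le_cross; [lra | lra |].
  destruct (deltap_cases d1 Q) as [[H1 ->] | [H1 ->]];
    destruct (deltap_cases d2 Q) as [[H2 ->] | [H2 ->]];
    unfold delta in *; nra.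
Qed.

Lemma finite_min_exists (a : R) (f : nat -> R) (P : nat -> Prop) N :
  exists v, (v = a \/ exists r, P r /\ v = f r) /\ v <= a
            /\ forall r, P r -> (r < N)%nat -> v <= f r.
Proof.
  induction N as [|N [v [Hv [Hva Hvf]]]].
  - exists a; repeat split; [now left | lra | intros; lia].
  - destruct (classic (P N /\ f N < v)) as [[HPN HfN] | Hnot].
    + exists (f N); repeat split; [right; eauto | lra |].
      intros r Pr Hr; destruct (Nat.eq_dec r N) as [-> | Hne]; [lra|].
      specialize (Hvf r Pr ltac:(lia)); lra.
    + exists v; repeat split; auto.
      intros r Pr Hr; destruct (Nat.eq_dec r N) as [-> | Hne].
      * apply Rnot_lt_le; intro; apply Hnot; auto.
      * apply Hvf; auto; lia.
Qed.

Section MinTerms.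
Variables (L : nat -> Prop) (q : nat -> nat).

Definition is_min_terms (d v : R) : Prop :=
  (v = term0 q d \/ exists r, Rset L q d r /\ v = termr L q d r)
  /\ v <= term0 q d /\ forall r, Rset L q d r -> v <= termr L q d r.

Lemma ell_in_L r : (exists l, Iset L q r l) -> L (ell L q r).
Proof.
  intros HI.
  destruct (dec_inh_nat_subset_has_unique_least_element (Iset L q r)
              (fun n => classic _) HI) as [l [Hl _]].
  destruct (epsilon_spec (inhabits 0%nat)
              (fun l => Iset L q r l /\ forall m, Iset L q r m -> (l <= m)%nat)
              (ex_intro _ l Hl)) as [[HL _] _].
  exact HL.
Qed.

Lemma Rset_bounded d : d < 1 / 2 -> exists N, forall r, Rset L q d r -> (r < N)%nat.
Proof.
  intros Hd; destruct (archimed_cor1 (1 - 2 * d)) as [N [HN HN0]]; [lra|].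
  exists N; intros r [_ Hr]; unfold delta in Hr.
  destruct (Nat.lt_ge_cases r N) as [|HNr]; [assumption | exfalso].
  apply le_INR in HNr; apply lt_INR in HN0; simpl in HN0.
  assert (HNinv : INR N * / INR N = 1) by (field; lra).
  assert (0 < / INR N) by (apply Rinv_0_lt_compat; lra).
  nra.
Qed.

Lemma min_terms_spec d : d < 1 / 2 -> is_min_terms d (min_terms L q d).
Proof.
  intros Hd; apply (epsilon_spec (inhabits 0) (is_min_terms d)).
  destruct (Rset_bounded d Hd) as [N HN].
  destruct (finite_min_exists (term0 q d) (termr L q d) (Rset L q d) N)
    as [v [Hv [Hva Hvf]]].
  exists v; repeat split; auto.
Qed.

Lemma Rset_Jne d r : Rset L q d r -> Jne L q d.
Proof.
  intros [[l [HLl [HLSl Hq]]] Hd]; exists l; repeat split; auto.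
  replace (INR (q (S l)) - INR (q l)) with (INR r + 1); [exact Hd|].
  rewrite Hq, !plus_INR; simpl; lra.
Qed.

Lemma Rset_mono d1 d2 r : d1 <= d2 -> Rset L q d1 r -> Rset L q d2 r.
Proof.
  intros H12 [HI Hd]; split; [exact HI|].
  pose proof (delta_nondecreasing d1 d2 (INR r + 1) ltac:(pose proof (pos_INR r); lra) H12); lra.
Qed.

Definition nu_above_quarter (d : R) : R :=
  if decP (Jne L q d) then min_terms L q d else term0 q d.

Lemma nu_above_quarter_spec d : d < 1 / 2 -> is_min_terms d (nu_above_quarter d).
Proof.
  intros Hd; unfold nu_above_quarter; destruct (classic (Jne L q d)) as [HJ | HJ].
  - rewrite decP_true by exact HJ; exact (min_terms_spec d Hd).
  - rewrite decP_false by exact HJ; repeat split; [now left | lra |].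
    intros r Hr; exfalso; exact (HJ (Rset_Jne d r Hr)).
Qed.

Lemma nu_above_quarter_le_termr_0 d : 0 < d -> d < 1 / 2 -> (exists l, Iset L q 0 l) ->
  nu_above_quarter d <= termr L q d 0.
Proof.
  intros Hd0 Hd HI; apply (nu_above_quarter_spec d Hd); split; [exact HI|].
  unfold delta; rewrite INR_0; lra.
Qed.

Hypothesis q_pos : forall n, L n -> (1 <= q n)%nat.

Lemma ell_q_ge1 r : (exists l, Iset L q r l) -> 1 <= INR (q (ell L q r)).
Proof. intros HI; apply (le_INR 1), q_pos, ell_in_L, HI. Qed.

Lemma nu_above_quarter_antitone d1 d2 : 2 <= INR (q 1%nat) ->
  1 / 4 < d1 -> d1 <= d2 -> d2 < 1 / 2 -> nu_above_quarter d2 <= nu_above_quarter d1.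
Proof.
  intros Hq1 Hd1 H12 Hd2.
  destruct (nu_above_quarter_spec d2 Hd2) as [_ [Hv2_0 Hv2_r]].
  destruct (nu_above_quarter_spec d1 ltac:(lra)) as [[-> | [r [Hr ->]]] _].
  - eapply Rle_trans; [exact Hv2_0 | apply term0_antitone; lra].
  - eapply Rle_trans; [apply Hv2_r; apply (Rset_mono d1); [exact H12 | exact Hr]|].
    apply termr_antitone; [apply ell_q_ge1, Hr | exact H12 | apply Hr].
Qed.

End MinTerms.

Lemma nu_c_q0_eq1 L q d : L 1%nat -> q 0%nat = 1%nat ->
  nu_c L q d =
  if decP (d <= 1 / 4) then
    (if decP (exists l, Iset L q 0 l) then Some (termr L q d 0) else None)
  else Some (nu_above_quarter L q d).
Proof.
  intros HL1 Hq0; unfold nu_c, nu_above_quarter.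
  rewrite decP_false by tauto; rewrite Hq0, termr_0.
  simpl Nat.eqb; cbv iota; now destruct (decP (Jne L q d)).
Qed.

Lemma nu_c_antitone L q
  (Hpos : forall n, L n -> (1 <= q n)%nat)
  (Hinc : forall n, L (S n) -> (q n < q (S n))%nat) (Hq0 : q 0%nat = 1%nat) d1 d2 :
  0 < d1 -> d1 <= d2 -> d2 < 1 / 2 -> ext_le (nu_c L q d2) (nu_c L q d1).
Proof.
  intros Hd1 H12 Hd2.
  destruct (classic (L 1%nat)) as [HL1 | HL1];
    [| unfold nu_c; rewrite decP_true by exact HL1; exact I].
  assert (Hq1 : 2 <= INR (q 1%nat)).
  { pose proof (Hinc 0%nat HL1) as Hq01; rewrite Hq0 in Hq01; exact (le_INR 2 _ Hq01). }
  rewrite !nu_c_q0_eq1 by assumption.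
  destruct (classic (d1 <= 1 / 4)) as [H1 | H1].
  - rewrite (decP_true (d1 <= 1 / 4)) by exact H1.
    destruct (classic (exists l, Iset L q 0 l)) as [HI | HI];
      [rewrite !(decP_true (exists l, Iset L q 0 l)) by exact HI
      | rewrite (decP_false (exists l, Iset L q 0 l)) by exact HI; exact I].
    assert (Hterm : termr L q d2 0 <= termr L q d1 0).
    { apply termr_antitone; [exact (ell_q_ge1 L q Hpos 0 HI) | exact H12 |].
      unfold delta; simpl; lra. }
    destruct (classic (d2 <= 1 / 4)) as [H2 | H2].
    + rewrite (decP_true (d2 <= 1 / 4)) by exact H2; exact Hterm.
    + rewrite (decP_false (d2 <= 1 / 4)) by exact H2; simpl.
      eapply Rle_trans; [apply nu_above_quarter_le_termr_0; [lra | exact Hd2 | exact HI] | exact Hterm].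
  - rewrite (decP_false (d1 <= 1 / 4)), (decP_false (d2 <= 1 / 4)) by lra; simpl.
    apply (nu_above_quarter_antitone L q Hpos); lra.
Qed.

Lemma nu_c_monotone L q (Hq0 : (2 <= q 0%nat)%nat) d1 d2 :
  d1 <= d2 -> d2 < 1 / 2 -> ext_le (nu_c L q d1) (nu_c L q d2).
Proof.
  intros H12 Hd2; unfold nu_c.
  destruct (classic (L 1%nat)) as [HL1 | HL1]; [| rewrite decP_true by exact HL1; exact I].
  rewrite decP_false by tauto.
  replace (Nat.eqb (q 0%nat) 1) with false by (symmetry; apply Nat.eqb_neq; lia).
  destruct (classic (exists l, Iset L q 0 l)) as [HI | HI];
    [rewrite decP_true by exact HI | rewrite decP_false by exact HI; exact I].
  apply q0_branch_monotone; assumption.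
Qed.

Theorem lemma9p5 (L : nat -> Prop) (q : nat -> nat)
  (HL0 : L 0%nat)
  (HLdown : forall n, L (S n) -> L n)
  (Hpos : forall n, L n -> (1 <= q n)%nat)
  (Hinc : forall n, L (S n) -> (q n < q (S n))%nat) :
  (q 0%nat = 1%nat ->
     forall d1 d2 : R,
       1 / 2 * (1 - 1 / INR (q 0%nat)) < d1 -> d1 <= d2 -> d2 < 1 / 2 ->
       ext_le (nu_c L q d2) (nu_c L q d1)) /\
  ((2 <= q 0%nat)%nat ->
     forall d1 d2 : R,
       1 / 2 * (1 - 1 / INR (q 0%nat)) < d1 -> d1 <= d2 -> d2 < 1 / 2 ->
       ext_le (nu_c L q d1) (nu_c L q d2)).
Proof.
  split; intros Hq0 d1 d2 Hd1 H12 Hd2.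
  - apply nu_c_antitone; try assumption.
    rewrite Hq0 in Hd1; simpl in Hd1; lra.
  - now apply nu_c_monotone.
Qed.
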